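(* Let $n,m,p$ be positive integers with $m\le n$. Let $b_1,\dots,b_m\in\mathbb{R}^n$ be column vectors with nonnegative integer entries $b_{kj}$ such that $B=[b_1,\dots,b_m]$ has rank $m$ and no zero row, let $A=[a_{ij}]$ be an irreducible $m\times m$ matrix with nonnegative entries, and $f(x)=\sum_{i,j=1}^m a_{ij}\,x_1^{b_{1j}}\cdots x_n^{b_{nj}}\,(b_i-b_j)$. Let $C=[c_{ij}]$ be a $p\times n$ matrix with each entry $0$ or a real number $\ge1$, and $h_i(x)=|x_1|^{c_{i1}}\cdots|x_n|^{c_{in}}$. Let $\mathcal{D}=\mathrm{span}\{b_i-b_j\}$ and assume no boundary equilibria (whenever $x\in\mathbb{R}^n_{\ge0}$ has a zero coordinate and $x-\bar x\in\mathcal{D}$ for some $\bar x\in\mathbb{R}^n_{>0}$, then $f(x)\ne0$). Let $f^*(z,u)=f(z)+C'(u-h(z))$. For $\bar x\in E_+$ let $V(z)=\sum_{i=1}^n\bar x_i\,g(z_i/\bar x_i)$, where $g(r)=r\ln r+1-r$ for $r>0$, $g(0)=1$. Then for each $\bar x\in E_+$ and each constant $u_{\max}\ge0$ there exists a constant $c_{\bar x,u_{\max}}$ such that $\nabla V(z)f^*(z,u)\le c_{\bar x,u_{\max}}$ for all $z\in\mathbb{R}^n_{>0}$ and all $u\in[0,u_{\max}]^p$.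
   Context: $E_+=\{x\in\mathbb{R}^n_{>0}:f(x)=0\}$. $C'$ is the transpose of $C$. *)

From HB Require Import structures.
From mathcomp Require Import all_boot all_order all_algebra.
From mathcomp Require Import all_classical all_reals all_analysis.
Set Implicit Arguments. Unset Strict Implicit. Unset Printing Implicit Defensive.
Import Order.TTheory GRing.Theory Num.Theory.
Local Open Scope ring_scope.

Section Defs.
Variable R : realType.

Definition natmx_real n m (B : 'M[nat]_(n, m)) : 'M[R]_(n, m) :=
  map_mx (fun k : nat => k%:R) B.

Definition bcol n m (B : 'M[nat]_(n, m)) (j : 'I_m) : 'cV[R]_n := col j (natmx_real B).

(* irreducible matrix: there is no nonempty proper set S of indices with
   A i j = 0 for all i in S, j not in S (equivalently no permutation
   brings A to block-triangular form) *)
Definition irreducible_mx m (A : 'M[R]_m) : Prop :=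
  forall S : {set 'I_m}, S != finset.set0 -> S != [set: 'I_m] ->
    exists i j, [/\ i \in S, j \notin S & A i j != 0].

Definition monom n m (B : 'M[nat]_(n, m)) (j : 'I_m) (x : 'cV[R]_n) : R :=
  \prod_(k < n) (x k 0) ^+ (B k j).

Definition fvec n m (A : 'M[R]_m) (B : 'M[nat]_(n, m)) (x : 'cV[R]_n) : 'cV[R]_n :=
  \sum_(i < m) \sum_(j < m) (A i j * monom B j x) *: (bcol B i - bcol B j).

Definition hvec p n (C : 'M[R]_(p, n)) (x : 'cV[R]_n) : 'cV[R]_p :=
  \col_(i < p) \prod_(k < n) (powR `|x k 0| (C i k)).

Definition fstar n m p (A : 'M[R]_m) (B : 'M[nat]_(n, m)) (C : 'M[R]_(p, n))
  (z : 'cV[R]_n) (u : 'cV[R]_p) : 'cV[R]_n :=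
  fvec A B z + C^T *m (u - hvec C z).

Definition in_D n m (B : 'M[nat]_(n, m)) (v : 'cV[R]_n) : Prop :=
  exists lam : 'I_m -> 'I_m -> R,
    v = \sum_(i < m) \sum_(j < m) lam i j *: (bcol B i - bcol B j).

Definition pos_vec n (x : 'cV[R]_n) : Prop := forall k, 0 < x k 0.
Definition nneg_vec n (x : 'cV[R]_n) : Prop := forall k, 0 <= x k 0.

Definition no_boundary_equilibria n m (A : 'M[R]_m) (B : 'M[nat]_(n, m)) : Prop :=
  forall x : 'cV[R]_n, nneg_vec x -> (exists k, x k 0 = 0) ->
    (exists xb : 'cV[R]_n, pos_vec xb /\ in_D B (x - xb)) ->
    fvec A B x != 0.

Definition Eplus n m (A : 'M[R]_m) (B : 'M[nat]_(n, m)) (x : 'cV[R]_n) : Prop :=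
  pos_vec x /\ fvec A B x = 0.

(* g(r) = r ln r + 1 - r for r > 0, g(0) = 1 (value for r < 0 irrelevant) *)
Definition gfun (r : R) : R := if 0 < r then r * ln r + 1 - r else 1.

Definition Vfun n (xb : 'cV[R]_n) (z : 'cV[R]_n) : R :=
  \sum_(i < n) xb i 0 * gfun (z i 0 / xb i 0).

Definition partial n (k : 'I_n) (F : 'cV[R]_n -> R) (z : 'cV[R]_n) : R :=
  derive1 (fun t : R => F (z + t *: delta_mx k 0)) 0.

Definition grad_dot n (F : 'cV[R]_n -> R) (z w : 'cV[R]_n) : R :=
  \sum_(k < n) partial k F z * w k 0.

End Defs.

From HB Require Import structures.
From mathcomp Require Import all_boot all_order all_algebra.
From mathcomp Require Import all_classical all_reals all_analysis.
From mathcomp Require Import lra ring.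
Set Implicit Arguments.
Unset Strict Implicit.

Import Order.TTheory GRing.Theory Num.Theory.
Local Open Scope ring_scope.

(* The gradient of V at z is the vector L = (ln (z_k / xb_k))_k.  Since B has
   full column rank, f(xb) = 0 forces xb to be complex balanced.  Writing
   z^b_j = xb^b_j e^(y_j) with y_j = <L, b_j>, the drift part is
   L . f(z) = sum_ij a_ij xb^b_j e^(y_j) (y_i - y_j)
            <= sum_ij a_ij xb^b_j (e^(y_i) - e^(y_j)) = 0.
   The control part is sum_i (u_i - h_i(z)) ln (h_i(z) / h_i(xb)), and each
   term is bounded by h_i(xb) e^(umax / h_i(xb)) using ln y <= y - 1 twice.
   Irreducibility of A, the absence of boundary equilibria and the
   restrictions on the entries of C are not needed for this bound. *)

Section RealInequalities.
Variable R : realType.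

Lemma ln_le_subr1 (x : R) : 0 < x -> ln x <= x - 1.
Proof.
move=> x0; have := @le_ln1Dx R (x - 1).
rewrite addrCA subrr addr0; apply; lra.
Qed.

Lemma expR_mul_sub_le (s t : R) : expR s * (t - s) <= expR t - expR s.
Proof.
have -> : expR t = expR s * expR (t - s) by rewrite -expRD addrC subrK.
rewrite -[X in _ <= _ - X]mulr1 -mulrBr ler_wpM2l ?expR_ge0 //.
by have := expR_ge1Dx (t - s); lra.
Qed.

Lemma sub_mul_ln_ratio_le (H h u U : R) : 0 < H -> 0 < h -> 0 <= u <= U ->
  (u - h) * (ln h - ln H) <= H * expR (U / H).
Proof.
move=> H0 h0 /andP[u0 uU].
set M := expR (U / H); set L := ln h - ln H.
set q := h / H; set r := H * M / h.
have q0 : 0 < q by rewrite divr_gt0.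
have M0 : 0 < M by rewrite expR_gt0.
have r0 : 0 < r by rewrite divr_gt0 ?mulr_gt0.
have lnq : L <= q - 1 by rewrite /L -ln_div ?posrE // ln_le_subr1.
have lnr : U / H - L <= r - 1.
  have := @ln_le_subr1 r r0.
  by rewrite /r ln_div ?posrE ?mulr_gt0 // lnM ?posrE // /M expRK /L; lra.
have hr : h * r = H * M by rewrite /r mulrC divfK ?gt_eqF.
have hU : h * (U / H) = U * q by rewrite /q mulrCA.
have e1 : u * L <= u * (q - 1) by apply: ler_wpM2l.
have e2 : h * (U / H - L) <= h * (r - 1) by apply: ler_wpM2l => //; exact: ltW.
have e3 : u * q <= U * q by apply: ler_wpM2r => //; exact: ltW.
move: e1 e2 e3; rewrite !mulrBr hU hr mulr1 mulrBl.
have : 0 < H * M by rewrite mulr_gt0.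
lra.
Qed.

End RealInequalities.

Section LyapunovGradient.
Variable R : realType.

Definition relent (b s : R) : R := s * (ln s - ln b) + b - s.

Lemma mul_gfun_div (b s : R) : 0 < b -> 0 < s -> b * gfun (s / b) = relent b s.
Proof.
move=> b0 s0; rewrite /gfun divr_gt0 // /relent ln_div ?posrE //.
have e : b * (s / b) = s by rewrite mulrCA divff ?gt_eqF // mulr1.
by rewrite mulrBr mulrDr mulr1 mulrA e.
Qed.

Lemma is_derive_relent (b s : R) : 0 < s -> is_derive s 1 (relent b) (ln s - ln b).
Proof.
move=> s0; have := is_derive1_ln s0; rewrite /relent => dln.
apply: is_derive_eq.
by rewrite subr0 addr0 /GRing.scale /= mulr1 mulfV ?gt_eqF // addrC addKr.
Qed.

Variables (n : nat) (xb : 'cV[R]_n).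
Hypothesis xb_pos : pos_vec xb.

Lemma Vfun_shift (z : 'cV[R]_n) (k : 'I_n) (t : R) : 0 < z k 0 + t ->
  Vfun xb (z + t *: delta_mx k 0) =
  \sum_(i < n | i != k) xb i 0 * gfun (z i 0 / xb i 0) + relent (xb k 0) (z k 0 + t).
Proof.
move=> zt0; rewrite /Vfun (bigD1 k) //= addrC; congr (_ + _).
  by apply: eq_bigr => i /negbTE ik; rewrite !mxE ik mulr0 addr0.
by rewrite !mxE eqxx mulr1 mul_gfun_div.
Qed.

Lemma partial_Vfun (z : 'cV[R]_n) (k : 'I_n) : pos_vec z ->
  partial k (Vfun xb) z = ln (z k 0) - ln (xb k 0).
Proof.
move=> z_pos; set a := z k 0; set b := xb k 0.
set c := \sum_(i < n | i != k) xb i 0 * gfun (z i 0 / xb i 0).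
have dshift : is_derive (0 : R) 1 (fun t => c + relent b (t + a)) (ln a - ln b).
  have dtr : is_derive (0 : R) 1 (fun t => t + a) 1.
    by apply: is_derive_eq; rewrite addr0.
  have drel : is_derive ((fun t => t + a) 0) 1 (relent b) (ln a - ln b).
    by rewrite /= add0r; exact: is_derive_relent _ (z_pos k).
  have dcomp := @is_derive1_comp R (relent b) (fun t => t + a) 0 _ _ drel dtr.
  by apply: is_derive_eq; rewrite add0r mul1r mulr1.
have near_shift :
    \forall t \near 0, c + relent b (t + a) = Vfun xb (z + t *: delta_mx k 0).
  have := @lt_nbhsr R (- a) 0; rewrite oppr_lt0 => /(_ (z_pos k)).
  apply: filterS => t ht; have at0 : 0 < a + t by lra.
  by rewrite Vfun_shift // [t + a]addrC.
rewrite /partial derive1E.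
have dV := near_eq_is_derive near_shift dshift.
by rewrite derive_val.
Qed.

Lemma grad_dot_Vfun (z w : 'cV[R]_n) : pos_vec z ->
  grad_dot (Vfun xb) z w = \sum_k (ln (z k 0) - ln (xb k 0)) * w k 0.
Proof. by move=> z_pos; apply: eq_bigr => k _; rewrite partial_Vfun. Qed.

End LyapunovGradient.

Section MassAction.
Variable R : realType.

Definition complex_balanced m (A : 'M[R]_m) (w : 'I_m -> R) : Prop :=
  forall i, \sum_j A i j * w j = \sum_j A j i * w i.

Lemma complex_balanced_entropy_le0 m (A : 'M[R]_m) (w y : 'I_m -> R) :
  (forall i j, 0 <= A i j) -> (forall j, 0 <= w j) -> complex_balanced A w ->
  \sum_i \sum_j A i j * (w j * expR (y j)) * (y i - y j) <= 0.
Proof.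
move=> A_ge0 w_ge0 balanced.
apply: (@le_trans _ _ (\sum_i \sum_j A i j * w j * (expR (y i) - expR (y j)))).
  apply: ler_sum => i _; apply: ler_sum => j _.
  by rewrite mulrA -mulrA ler_wpM2l ?mulr_ge0 ?expR_mul_sub_le.
under eq_bigr => i _ do under eq_bigr => j _ do rewrite mulrBr.
under eq_bigr do rewrite sumrB.
rewrite sumrB subr_le0.
under eq_bigr => i _ do rewrite -mulr_suml balanced mulr_suml.
by rewrite exchange_big.
Qed.

Variables (n m : nat) (A : 'M[R]_m) (B : 'M[nat]_(n, m)).

Lemma monom_expR (x : 'cV[R]_n) j : pos_vec x ->
  monom B j x = expR (\sum_k (B k j)%:R * ln (x k 0)).
Proof.
move=> x_pos; rewrite /monom expR_sum; apply: eq_bigr => k _.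
by rewrite expRM_natl lnK ?posrE.
Qed.

Lemma fvecE (x : 'cV[R]_n) k :
  fvec A B x k 0 = \sum_i \sum_j A i j * monom B j x * ((B k i)%:R - (B k j)%:R).
Proof.
rewrite /fvec summxE; apply: eq_bigr => i _; rewrite summxE.
by apply: eq_bigr => j _; rewrite /bcol /natmx_real !mxE.
Qed.

Lemma fvec_net_flux (x : 'cV[R]_n) :
  fvec A B x = natmx_real R B *m
    \col_i (\sum_j A i j * monom B j x - \sum_j A j i * monom B i x).
Proof.
apply/matrixP => k a; rewrite (ord1 a) fvecE !mxE.
under eq_bigr => i _ do under eq_bigr => j _ do rewrite mulrBr.
under eq_bigr do rewrite sumrB.
under [RHS]eq_bigr do rewrite !mxE mulrBr !mulr_sumr.
rewrite !sumrB [X in _ - X = _]exchange_big /=; congr (_ - _).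
  by apply: eq_bigr => i _; apply: eq_bigr => j _; rewrite mulrC.
by apply: eq_bigr => i _; apply: eq_bigr => j _; rewrite mulrC.
Qed.

Lemma fvec_eq0_complex_balanced (x : 'cV[R]_n) :
  \rank (natmx_real R B) = m -> fvec A B x = 0 ->
  complex_balanced A (fun j => monom B j x).
Proof.
move=> rankB fx0 i; apply/eqP; rewrite -subr_eq0.
have Bfree : row_free (natmx_real R B)^T by rewrite /row_free mxrank_tr rankB.
move: fx0; rewrite fvec_net_flux => /(congr1 trmx); rewrite trmx_mul trmx0.
move/eqP; rewrite mulmx_free_eq0 // => /eqP /matrixP /(_ 0 i).
by rewrite !mxE => ->.
Qed.

Lemma log_ratio_dot_fvec_le0 (xb z : 'cV[R]_n) :
  (forall i j, 0 <= A i j) -> \rank (natmx_real R B) = m -> Eplus A B xb ->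
  pos_vec z -> \sum_k (ln (z k 0) - ln (xb k 0)) * fvec A B z k 0 <= 0.
Proof.
move=> A_ge0 rankB [xb_pos fxb0] z_pos.
pose y j := \sum_k (B k j)%:R * (ln (z k 0) - ln (xb k 0)).
have monom_z j : monom B j z = monom B j xb * expR (y j).
  rewrite !monom_expR // -expRD -big_split /=; congr expR.
  by apply: eq_bigr => k _; ring.
have monom_xb_ge0 j : 0 <= monom B j xb by rewrite monom_expR // expR_ge0.
suff -> : \sum_k (ln (z k 0) - ln (xb k 0)) * fvec A B z k 0 =
    \sum_i \sum_j A i j * (monom B j xb * expR (y j)) * (y i - y j).
  exact: complex_balanced_entropy_le0 A_ge0 monom_xb_ge0
    (fvec_eq0_complex_balanced rankB fxb0).
under eq_bigr do rewrite fvecE mulr_sumr.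
under eq_bigr => k _ do under eq_bigr => i _ do rewrite mulr_sumr.
rewrite exchange_big; apply: eq_bigr => i _; rewrite exchange_big.
apply: eq_bigr => j _; rewrite -monom_z -sumrB mulr_sumr; apply: eq_bigr => k _.
ring.
Qed.

End MassAction.

Section Control.
Variable R : realType.
Variables (p n : nat) (C : 'M[R]_(p, n)).

Lemma hvec_expR (x : 'cV[R]_n) i : pos_vec x ->
  hvec C x i 0 = expR (\sum_k C i k * ln (x k 0)).
Proof.
move=> x_pos; rewrite mxE expR_sum; apply: eq_bigr => k _.
by rewrite /powR gtr0_norm // gt_eqF // mulrC.
Qed.

Lemma log_ratio_dot_control (xb z : 'cV[R]_n) (w : 'cV[R]_p) :
  pos_vec xb -> pos_vec z ->
  \sum_k (ln (z k 0) - ln (xb k 0)) * (C^T *m w) k 0 =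
  \sum_i w i 0 * (ln (hvec C z i 0) - ln (hvec C xb i 0)).
Proof.
move=> xb_pos z_pos.
under [RHS]eq_bigr do rewrite !hvec_expR // !expRK -sumrB mulr_sumr.
under [LHS]eq_bigr do rewrite mxE mulr_sumr.
rewrite exchange_big; apply: eq_bigr => i _; apply: eq_bigr => k _.
rewrite !mxE; ring.
Qed.

End Control.

Theorem lemma2p10 (R : realType) (n m p : nat)
  (A : 'M[R]_m) (B : 'M[nat]_(n, m)) (C : 'M[R]_(p, n)) :
  (0 < n)%N -> (0 < m)%N -> (0 < p)%N -> (m <= n)%N ->
  \rank (natmx_real R B) = m ->
  (forall k : 'I_n, exists j : 'I_m, B k j <> 0%N) ->
  (forall i j, 0 <= A i j) ->
  irreducible_mx A ->
  (forall i k, C i k = 0 \/ 1 <= C i k) ->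
  no_boundary_equilibria A B ->
  forall xb : 'cV[R]_n, Eplus A B xb ->
  forall umax : R, 0 <= umax ->
  exists c : R, forall (z : 'cV[R]_n) (u : 'cV[R]_p),
    pos_vec z -> (forall i, 0 <= u i 0 <= umax) ->
    grad_dot (Vfun xb) z (fstar A B C z u) <= c.
Proof.
move=> _ _ _ _ rankB _ A_ge0 _ _ _ xb xb_eq umax _.
have xb_pos := xb_eq.1.
have h_pos (x : 'cV[R]_n) i : pos_vec x -> 0 < hvec C x i 0.
  by move=> x_pos; rewrite hvec_expR // expR_gt0.
exists (\sum_i hvec C xb i 0 * expR (umax / hvec C xb i 0)) => z u z_pos u_range.
rewrite grad_dot_Vfun //.
under eq_bigr do rewrite /fstar mxE mulrDr.
rewrite big_split /= -[X in _ <= X]add0r lerD ?log_ratio_dot_fvec_le0 //.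
rewrite log_ratio_dot_control //; apply: ler_sum => i _.
rewrite [(u - _) i 0]mxE [(- hvec C z) i 0]mxE.
exact: sub_mul_ln_ratio_le (h_pos _ _ xb_pos) (h_pos _ _ z_pos) (u_range i).
Qed.
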